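(* Let $n\geq 4$. If $\mathcal{C}\subseteq S_n$ is a code with minimum Kendall's $\tau$-distance $4$ (i.e., $d_K(\sigma,\pi)\geq 4$ for all distinct $\sigma,\pi\in\mathcal{C}$), then $|\mathcal{C}|\leq \frac{n!}{2(n-1)}$.
   Context: $S_n$ denotes the set of all permutations of $[n]=\{1,\dots,n\}$, written $\sigma=[\sigma(1),\dots,\sigma(n)]$. An adjacent transposition applied to $\sigma$ exchanges the entries in positions $i$ and $i+1$ for some $1\leq i\leq n-1$. The Kendall's $\tau$-distance $d_K(\sigma,\pi)$ is the minimum number of adjacent transpositions needed to transform $\sigma$ into $\pi$. *)

From mathcomp Require Import all_boot all_order all_algebra all_fingroup.
Set Implicit Arguments. Unset Strict Implicit. Unset Printing Implicit Defensive.

(* A permutation sigma of [n] is represented by s : 'S_n (= {perm 'I_n}),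
   position i (0-based) holding the entry s i. *)

(* Applying the adjacent transposition at positions i, i+1 to s exchanges the
   entries in those positions: the result is s o (i i+1). *)
Definition adj_swap n (s : 'S_n) (i : 'I_n) (Hi : i.+1 < n) : 'S_n :=
  (tperm i (Ordinal Hi) * s)%g.
(* NB: in mathcomp, (p * q)%g x = q (p x), so this maps x to s (tperm i i+1 x). *)

Inductive adj_reach n : nat -> 'S_n -> 'S_n -> Prop :=
  | adj_reach0 s : adj_reach 0 s s
  | adj_reachS k s t (i : 'I_n) (Hi : i.+1 < n) :
      adj_reach k (adj_swap s Hi) t -> adj_reach k.+1 s t.

(* d_K(s,t) >= d  iff  every sequence of adjacent transpositions turning s
   into t has length >= d (i.e. the minimum such length is >= d). *)
Definition kendall_ge n (d : nat) (s t : 'S_n) : Prop :=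
  forall k, adj_reach k s t -> d <= k.

Definition kendall_code n (d : nat) (C : {set 'S_n}) : Prop :=
  forall s t, s \in C -> t \in C -> s != t -> kendall_ge d s t.

(* Let N(x) be the n - 1 permutations one adjacent transposition away from x.
   Distance 4 makes the sets N(c), c in C, pairwise disjoint, and forbids an
   edge between N(c) and N(c'): c = c' would give a closed walk of length 3,
   impossible since every adjacent transposition flips the sign.  Hence each
   w either lies in some N(c), and then none of its n - 1 neighbours does, or
   it does not.  Summing over w the number of neighbours of w in the union of
   the N(c), plus n - 1 times the indicator of w being in that union, gives at
   most (n - 1) n!; both sums equal (n - 1)^2 |C|, so 2 (n - 1) |C| <= n!. *)

From mathcomp Require Import all_boot all_order all_algebra all_fingroup.
From mathcomp Require Import zify.
Import GRing.Theory Num.Theory.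

Lemma odd_perm_adj_reach {n k} {s t : 'S_n} :
  adj_reach k s t -> odd_perm t = odd k (+) odd_perm s.
Proof.
elim=> {k s t} [s | k s t i Hi _ ->]; first by rewrite addFb.
have ne : i != Ordinal Hi by apply/eqP => /(congr1 val) /=; lia.
by rewrite odd_mul_tperm ne /= addbN addNb.
Qed.

Section AdjacentNeighbourhood.
Variable m : nat.

Definition adj_nbhd (s : 'S_m.+1) : {set 'S_m.+1} :=
  [set (tperm (widen_ord (leqnSn m) i) (lift ord0 i) * s)%g | i : 'I_m].

Lemma adj_reach_nbhd k (s t w : 'S_m.+1) :
  t \in adj_nbhd s -> adj_reach k t w -> adj_reach k.+1 s w.
Proof.
case/imsetP=> i _ ->{t} H.
have Hi : (widen_ord (leqnSn m) i).+1 < m.+1 by rewrite /= ltnS.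
apply: (@adj_reachS _ _ _ _ _ Hi).
suff -> : adj_swap s Hi = (tperm (widen_ord (leqnSn m) i) (lift ord0 i) * s)%g
  by [].
by rewrite /adj_swap; congr (tperm _ _ * _)%g; apply: val_inj.
Qed.

Lemma adj_nbhd_sym (s t : 'S_m.+1) : t \in adj_nbhd s -> s \in adj_nbhd t.
Proof.
case/imsetP=> i _ ->; apply/imsetP; exists i => //.
by rewrite mulgA tperm2 mul1g.
Qed.

Lemma card_adj_nbhd (s : 'S_m.+1) : #|adj_nbhd s| = m.
Proof.
rewrite card_imset ?card_ord // => i j /mulIg E.
have := congr1 (fun p : 'S_m.+1 => p (widen_ord (leqnSn m) i)) E.
rewrite tpermL /=; case: tpermP.
- by move=> /(congr1 val) /= H _; apply: val_inj.
- move=> /(congr1 val) /= H /(congr1 val) /=; rewrite /bump /= in H *; lia.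
- by move=> _ _ /(congr1 val) /=; rewrite /bump /=; lia.
Qed.

Lemma sum_mem_adj_nbhd (s : 'S_m.+1) : \sum_w (w \in adj_nbhd s : nat) = m.
Proof. by rewrite -big_mkcond sum1_card card_adj_nbhd. Qed.

End AdjacentNeighbourhood.

Arguments adj_nbhd {m} s.
Arguments card_adj_nbhd {m} s.
Arguments adj_reach_nbhd {m k s t w}.
Arguments adj_nbhd_sym {m s t}.

Section KendallCode.
Variables (m : nat) (C : {set 'S_m.+1}).
Hypothesis codeC : kendall_code 4 C.

Lemma kendall_code_reach_lt4 {k} {c c' : 'S_m.+1} :
  c \in C -> c' \in C -> k < 4 -> adj_reach k c c' -> c = c'.
Proof.
move=> cC c'C k_lt4 reach; apply/eqP; apply: contraT => ne.
by have := codeC _ _ cC c'C ne _ reach; rewrite leqNgt k_lt4.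
Qed.

Definition code_deg (u : 'S_m.+1) : nat := \sum_(c in C) (u \in adj_nbhd c).

Definition code_walks2 (w : 'S_m.+1) : nat :=
  \sum_u code_deg u * (w \in adj_nbhd u).

Lemma code_deg_nbhd {u c0} : c0 \in C -> u \in adj_nbhd c0 -> code_deg u = 1.
Proof.
move=> c0C uN; rewrite /code_deg (bigD1 c0) //= uN big1 // => c /andP [cC ne].
case uc: (u \in adj_nbhd c) => //; case/eqP: ne.
apply: (@kendall_code_reach_lt4 2 _ _ cC c0C) => //.
exact: adj_reach_nbhd uc (adj_reach_nbhd (adj_nbhd_sym uN) (adj_reach0 _)).
Qed.

Lemma code_degP u :
  code_deg u = 0 \/ exists2 c, c \in C & u \in adj_nbhd c.
Proof.
case: (pickP [pred c | (c \in C) && (u \in adj_nbhd c)]) => [c /andP[]|none].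
  by right; exists c.
by left; rewrite /code_deg big1 // => c cC; have := none c; rewrite /= cC /= => ->.
Qed.

Lemma code_deg_le1 u : code_deg u <= 1.
Proof. by case: (code_degP u) => [->|[c cC uc]]; rewrite ?(code_deg_nbhd cC uc). Qed.

Lemma code_walks2_deg_le w : code_walks2 w + m * code_deg w <= m.
Proof.
case: (code_degP w) => [->|[c0 c0C wc0]].
  rewrite muln0 addn0 -[X in _ <= X](card_adj_nbhd w) -sum1_card big_mkcond /=.
  apply: leq_sum => u _; have := code_deg_le1 u.
  case: (code_deg u) => [|[|//]] _ //=.
  by rewrite mul1n; case E: (w \in adj_nbhd u); rewrite ?(adj_nbhd_sym E).
rewrite (code_deg_nbhd c0C wc0) muln1 /code_walks2 big1 // => u _.
case wu: (w \in adj_nbhd u); last by rewrite muln0.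
case: (code_degP u) => [->//|[c cC uc]].
have reach3 : adj_reach 3 c c0.
  exact: adj_reach_nbhd uc (adj_reach_nbhd wu
    (adj_reach_nbhd (adj_nbhd_sym wc0) (adj_reach0 _))).
have := odd_perm_adj_reach reach3.
by rewrite (kendall_code_reach_lt4 cC c0C _ reach3) //=; case: odd_perm.
Qed.

Lemma sum_code_deg : \sum_u code_deg u = #|C| * m.
Proof.
rewrite /code_deg exchange_big /= -sum_nat_const.
by apply: eq_bigr => c _; apply: sum_mem_adj_nbhd.
Qed.

Lemma sum_code_walks2 : \sum_w code_walks2 w = m * (#|C| * m).
Proof.
rewrite /code_walks2 exchange_big /= -sum_code_deg big_distrr /=.
apply: eq_bigr => u _.
by rewrite -big_distrr /= mulnC sum_mem_adj_nbhd.
Qed.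

Lemma kendall_code4_card_bound : 2 * #|C| * m <= m.+1`!.
Proof.
have : \sum_w (code_walks2 w + m * code_deg w) <= \sum_(w : 'S_m.+1) m.
  by apply: leq_sum => w _; apply: code_walks2_deg_le.
rewrite big_split /= sum_code_walks2 -big_distrr /= sum_code_deg sum_nat_const.
rewrite [#|xpredT|]card_Sn; move: #|C| (m.+1)`! => c f bound.
by case: (posnP m) => [->|m_gt0]; [rewrite muln0 | nia].
Qed.

End KendallCode.

Theorem corollary2 (n : nat) (hn : 4 <= n) (C : {set 'S_n}) :
  kendall_code 4 C ->
  (#|C|%:R <= (n`!)%:R / (2 * (n - 1))%:R :> rat)%R.
Proof.
case: n hn C => [//|m] hn C codeC.
rewrite subn1 /= ler_pdivlMr; last by rewrite ltr0n; lia.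
by rewrite -natrM ler_nat mulnA [#|C| * 2]mulnC kendall_code4_card_bound.
Qed.
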